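(* Consider Algorithm 1 (delay-tolerant integer flow balancing, described in the context) run on a strongly connected digraph $\mathcal{G}_d$ with edge bounds $l_{ji},u_{ji}$, under any realization of transmission delays bounded by $\overline{\tau}<\infty$. Let $\mathcal{V}^-[k]=\{v_j\in\mathcal{V}: b_j[k]<0\}$. Then for every $k\ge 0$, $\mathcal{V}^-[k+1]\subseteq\mathcal{V}^-[k]$.
   Context: Setting: $\mathcal{G}_d=(\mathcal{V},\mathcal{E})$ is a strongly connected digraph, $\mathcal{V}=\{v_1,\dots,v_n\}$, $n\ge2$; an edge $(v_j,v_i)$ carries flow from $v_i$ to $v_j$. $\mathcal{N}_j^-=\{v_i:(v_j,v_i)\in\mathcal{E}\}$, $\mathcal{N}_j^+=\{v_l:(v_l,v_j)\in\mathcal{E}\}$, $\mathcal{D}_j=|\mathcal{N}_j^-|+|\mathcal{N}_j^+|$. Each edge has real bounds $1\le l_{ji}\le u_{ji}$. Communication is bidirectional along every edge. Projection: $[x]_{ji}=\max\{\lceil l_{ji}\rceil,\min\{\lfloor u_{ji}\rfloor,x\}\}$. State: for each edge $(v_l,v_j)$, the tail $v_j$ holds the actual flow $f_{lj}[k]$; for each edge $(v_j,v_i)$, the head $v_j$ holds a perceived flow $f^{(p)}_{ji}[k]$. Actual balance $b_j[k]=\sum_{v_i\in\mathcal{N}_j^-}f_{ji}[k]-\sum_{v_l\in\mathcal{N}_j^+}f_{lj}[k]$; perceived balance $b^{(p)}_j[k]=\sum_{v_i\in\mathcal{N}_j^-}f^{(p)}_{ji}[k]-\sum_{v_l\in\mathcal{N}_j^+}f_{lj}[k]$;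 total imbalance $\varepsilon[k]=\sum_j|b_j[k]|$. Algorithm 1. Initialization: $f_{ji}[0]=f^{(p)}_{ji}[0]=\lceil l_{ji}\rceil$ for all edges; each $v_j$ fixes a cyclic order of its $\mathcal{D}_j$ incident (incoming and outgoing) edges and a pointer into it. Iteration $k=0,1,2,\dots$, at each node $v_j$: (1) compute $b^{(p)}_j[k]$. (2) If $b^{(p)}_j[k]>0$, starting at the pointer and cycling through the order, visit edges one at a time: at an outgoing edge $(v_l,v_j)$, if $f_{lj}[k]+c^{(j)}_{lj}[k]<\lfloor u_{lj}\rfloor$ add $1$ to $c^{(j)}_{lj}[k]$; at an incoming edge $(v_j,v_i)$, if $f^{(p)}_{ji}[k]+c^{(j)}_{ji}[k]>\lceil l_{ji}\rceil$ subtract $1$ from $c^{(j)}_{ji}[k]$ (the $c$'s start at $0$; edges at their limit are skipped); stop as soon as the total number of unit changes equals $b^{(p)}_j[k]$, leaving the pointer at the next edge. If $b^{(p)}_j[k]\le 0$, all $c^{(j)}[k]=0$. (3) $v_j$ transmits $c^{(j)}_{lj}[k]$ to each out-neighbor $v_l$ and $c^{(j)}_{ji}[k]$ to each in-neighbor $v_i$. A message sent at step $k$ over a link in a given direction is delivered at step $k+\tau$, where the integer $\tau\in[0,\overline{\tau}]$ is arbitrary (unknown, time-varying, independent across links and directions). (4) $v_j$ forms $\overline{c}^{(l)}_{lj}[k]$ (resp. $\overline{c}^{(i)}_{ji}[k]$) as the sum of all values $c^{(l)}_{lj}[k_0]$ (resp. $c^{(i)}_{ji}[k_0]$) sent by $v_l$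 (resp. $v_i$) that are delivered at step $k$ (zero if none). (5)–(6) $f_{lj}[k+1]=[f_{lj}[k]+c^{(j)}_{lj}[k]+\overline{c}^{(l)}_{lj}[k]]_{lj}$ and $f^{(p)}_{ji}[k+1]=[f^{(p)}_{ji}[k]+c^{(j)}_{ji}[k]+\overline{c}^{(i)}_{ji}[k]]_{ji}$. *)

From HB Require Import structures.
From mathcomp Require Import all_boot all_order all_algebra.
Set Implicit Arguments. Unset Strict Implicit. Unset Printing Implicit Defensive.
Import Order.TTheory GRing.Theory Num.Theory.
Local Open Scope ring_scope.

(* E : rel 'I_n, and  E a b  means (v_a, v_b) is an edge,
   i.e. flow goes from v_b to v_a.  So for node j:
     N_j^- = [pred i | E j i]   (j is the head of (v_j,v_i); j holds fp_{ji})
     N_j^+ = [pred l | E l j]   (j is the tail of (v_l,v_j); j holds f_{lj}).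
   Flows are int-valued: f k a b = f_{ab}[k] (held by tail b),
                         fp k a b = f^{(p)}_{ab}[k] (held by head a).
   An incident edge of node j is encoded as (true, l) for the outgoing edge
   (v_l, v_j) and (false, i) for the incoming edge (v_j, v_i). *)

Definition iedge n := (bool * 'I_n)%type.

Definition proj (R : archiRealFieldType) n (l u : 'I_n -> 'I_n -> R)
    (a b : 'I_n) (x : int) : int :=
  Num.max (Num.ceil (l a b)) (Num.min (Num.floor (u a b)) x).

Definition bal n (E : rel 'I_n) (f : 'I_n -> 'I_n -> int) (j : 'I_n) : int :=
  \sum_(i | E j i) f j i - \sum_(l | E l j) f l j.

Definition pbal n (E : rel 'I_n) (f fp : 'I_n -> 'I_n -> int) (j : 'I_n) : int :=
  \sum_(i | E j i) fp j i - \sum_(l | E l j) f l j.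

(* Step (2) of Algorithm 1: the cyclic visiting process at a node.
   cur e  = current value held by the node on edge e (f_{lj}[k] or fp_{ji}[k]),
   lim e  = floor u_{lj} (outgoing) or ceil l_{ji} (incoming),
   c      = accumulated changes c^{(j)}. *)
Definition avail n (cur lim c : iedge n -> int) (e : iedge n) : bool :=
  if e.1 then cur e + c e < lim e else lim e < cur e + c e.

Definition bump n (c : iedge n -> int) (e : iedge n) : iedge n -> int :=
  fun e' => if e' == e then c e + (if e.1 then 1 else -1) else c e'.

(* State after m visits, starting at position p0 in the cyclic order ord:
   (position of the next edge to visit, number of unit changes made, c). *)
Fixpoint visit n (d : iedge n) (ord : seq (iedge n)) (cur lim : iedge n -> int)
    (p0 : nat) (m : nat) : nat * int * (iedge n -> int) :=
  match m with
  | 0 => (p0, 0, fun _ => 0)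
  | m'.+1 =>
      let: (p, t, c) := visit d ord cur lim p0 m' in
      let e := nth d ord (p %% size ord) in
      if avail cur lim c e then (p.+1, t + 1, bump c e) else (p.+1, t, c)
  end.

Definition step2 n (d : iedge n) (ord : seq (iedge n)) (cur lim : iedge n -> int)
    (ptr : nat) (bp : int) (c : iedge n -> int) (ptr' : nat) : Prop :=
  if 0 < bp then
    exists m,
      (visit d ord cur lim ptr m).1.2 = bp /\
      (forall m', (m' < m)%N -> (visit d ord cur lim ptr m').1.2 < bp) /\
      (forall e, c e = (visit d ord cur lim ptr m).2 e) /\
      ptr' = ((visit d ord cur lim ptr m).1.1 %% size ord)%N
  else (forall e, c e = 0) /\ ptr' = ptr.

(* An execution of Algorithm 1.
   ord j   : the cyclic order of the D_j incident edges of j,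
   ptr k j : the pointer of j at step k (an index into ord j),
   cc k j e: c^{(j)}_e[k], the change computed by j at step k on incident edge e,
   tauO k t h : delay of the message sent at step k by the tail t of edge (v_h,v_t)
                to its head h,
   tauI k h t : delay of the message sent at step k by the head h of edge (v_h,v_t)
                to its tail t. *)
Definition alg1_run (R : archiRealFieldType) n (E : rel 'I_n)
    (l u : 'I_n -> 'I_n -> R) (taubar : nat)
    (ord : 'I_n -> seq (iedge n)) (ptr : nat -> 'I_n -> nat)
    (cc : nat -> 'I_n -> iedge n -> int)
    (tauO tauI : nat -> 'I_n -> 'I_n -> nat)
    (f fp : nat -> 'I_n -> 'I_n -> int) : Prop :=
  (forall j, uniq (ord j) /\
     forall e : iedge n, (e \in ord j) = (if e.1 then E e.2 j else E j e.2)) /\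
  (forall k a b, (tauO k a b <= taubar)%N /\ (tauI k a b <= taubar)%N) /\
  (forall a b, E a b -> f 0%N a b = Num.ceil (l a b) /\ fp 0%N a b = Num.ceil (l a b)) /\
  (forall k j,
     step2 (true, j) (ord j)
       (fun e => if e.1 then f k e.2 j else fp k j e.2)
       (fun e => if e.1 then Num.floor (u e.2 j) else Num.ceil (l j e.2))
       (ptr k j) (pbal E (f k) (fp k) j) (cc k j) (ptr k.+1 j)) /\
  (forall k lh j, E lh j ->
     f k.+1 lh j =
       proj l u lh j (f k lh j + cc k j (true, lh) +
         \sum_(k0 < k.+1 | (k0 + tauI k0 lh j == k)%N) cc k0 lh (false, j))) /\
  (forall k j i, E j i ->
     fp k.+1 j i =
       proj l u j i (fp k j i + cc k j (false, i) +
         \sum_(k0 < k.+1 | (k0 + tauO k0 i j == k)%N) cc k0 i (true, j))).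

From Pilot Require Import Defs.
From HB Require Import structures.
From mathcomp Require Import all_boot all_order all_algebra zify ring lra.
Import Order.TTheory GRing.Theory Num.Theory.
Set Implicit Arguments. Unset Strict Implicit.
Local Open Scope ring_scope.

(* 1. The visiting process of step (2) only ever raises outgoing flows and
      lowers perceived incoming flows, never beyond the integer limits, and its
      net effect on the perceived balance is exactly max(b^(p)_j, 0).
   2. Delays only postpone messages, so up to any time the amount delivered
      over a link is bounded by the amount sent (a one-signed quantity).
   3. On each edge the tail's increments and the head's decrements, whether
      applied locally or delivered, keep both copies of the flow within
      [ceil l, floor u]; hence the projection never clips, and the actual
      flow exceeds the perceived one by exactly the changes still in flight.
   4. If b^(p)_j[k] < 0, node j has never changed anything (b^(p)_j, once
      nonnegative, stays so), so b_j can only grow.  If b^(p)_j[k] >= 0, the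
      head decrements of j are covered by the surplus b_j - b^(p)_j plus what
      is being delivered back, which gives b_j[k+1] >= 0 outright. *)

Definition net_change n (c : iedge n -> int) (e : iedge n) : int :=
  if e.1 then c e else - c e.

Definition respects_limit n (cur lim c : iedge n -> int) (e : iedge n) : Prop :=
  if e.1 then 0 <= c e /\ (c e = 0 \/ cur e + c e <= lim e)
  else c e <= 0 /\ (c e = 0 \/ lim e <= cur e + c e).

Lemma sum_iedge n (F : iedge n -> int) :
  \sum_(e : iedge n) F e = \sum_l F (true, l) + \sum_i F (false, i).
Proof.
have -> : \sum_(e : iedge n) F e = \sum_(e : iedge n) (fun b i => F (b, i)) e.1 e.2.
  by apply: eq_bigr => -[].
by rewrite -(pair_bigA _ (fun b i => F (b, i))) big_bool.
Qed.

Section VisitingProcess.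
Variables (n : nat) (d : iedge n) (ord : seq (iedge n)) (cur lim : iedge n -> int).
Variable p0 : nat.
Hypothesis ord_nonempty : (0 < size ord)%N.

Lemma visit_invariant m :
  let st := visit d ord cur lim p0 m in
  [/\ st.1.2 = \sum_e net_change st.2 e,
      forall e, st.2 e != 0 -> e \in ord
    & forall e, respects_limit cur lim st.2 e].
Proof.
elim: m => [|m] /=.
  split=> [||e]; last by rewrite /respects_limit; case: ifP; split; auto.
    by rewrite big1 // => e _; rewrite /net_change oppr0; case: ifP.
  by move=> e /eqP.
case: (visit d ord cur lim p0 m) => [[p t] c] /= [count supp lim_ok].
set e0 := nth d ord (p %% size ord).
have e0_in : e0 \in ord by rewrite mem_nth // ltn_mod.
case: ifP => avail_e0 //=; split.
- rewrite count (bigD1 e0) //= [in RHS](bigD1 e0) //=.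
  have -> : \sum_(e | e != e0) net_change (Defs.bump c e0) e =
            \sum_(e | e != e0) net_change c e.
    by apply: eq_bigr => e /negbTE ne; rewrite /net_change /Defs.bump ne.
  by rewrite /net_change /Defs.bump eqxx; case: (e0.1); ring.
- by move=> e; rewrite /Defs.bump; case: (e =P e0) => [-> //|_]; exact: supp.
- move=> e; rewrite /respects_limit /Defs.bump; case: (e =P e0) => [->|_]; last exact: lim_ok.
  by move: (lim_ok e0) avail_e0; rewrite /respects_limit /avail; case: (e0.1) => -[]; lia.
Qed.

End VisitingProcess.

Lemma step2_spec n (d : iedge n) ord cur lim ptr bp c ptr' :
  (0 < bp -> (0 < size ord)%N) -> step2 d ord cur lim ptr bp c ptr' ->
  [/\ \sum_e net_change c e = Num.max bp 0,
      bp <= 0 -> forall e, c e = 0,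
      forall e, c e != 0 -> e \in ord
    & forall e, respects_limit cur lim c e].
Proof.
move=> nonempty; rewrite /step2; case: ifP => [bp_gt0 [m [count [_ [cE _]]]] | /negbT].
  have [sum_count supp lim_ok] := visit_invariant d cur lim ptr (nonempty bp_gt0) m.
  split.
  - by rewrite (max_l (ltW bp_gt0)) -count sum_count; apply: eq_bigr => e _; rewrite /net_change cE.
  - by rewrite leNgt bp_gt0.
  - by move=> e; rewrite cE; exact: supp.
  - by move=> e; move: (lim_ok e); rewrite /respects_limit !cE.
rewrite -leNgt => bp_le0 [c0 _].
split=> [|//||e]; last by rewrite /respects_limit c0; case: ifP; split; auto.
  by rewrite (max_r bp_le0) big1 // => e _; rewrite /net_change c0 oppr0; case: ifP.
by move=> e; rewrite c0 eqxx.
Qed.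

Definition delivered (g : nat -> int) (tau : nat -> nat) (k : nat) : int :=
  \sum_(k0 < k.+1 | (k0 + tau k0 == k)%N) g k0.

Lemma delivered_before (g : nat -> int) tau K :
  \sum_(k < K) delivered g tau k =
  \sum_(k0 < K) (if (k0 + tau k0 < K)%N then g k0 else 0).
Proof.
elim: K => [|K IH]; first by rewrite !big_ord0.
rewrite big_ord_recr /= IH /delivered [X in _ + X]big_mkcond [X in _ + X]big_ord_recr.
rewrite [RHS]big_ord_recr /=.
have -> : \sum_(k0 < K) (if (k0 + tau k0 < K.+1)%N then g k0 else 0) =
          \sum_(k0 < K) (if (k0 + tau k0 < K)%N then g k0 else 0) +
          \sum_(k0 < K) (if (k0 + tau k0 == K)%N then g k0 else 0).
  rewrite -big_split /=; apply: eq_bigr => k0 _.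
  rewrite ltnS leq_eqVlt; case: eqP => [->|_]; first by rewrite ltnn add0r.
  by case: ifP; rewrite ?addr0 ?add0r.
have -> : (K + tau K < K.+1)%N = (K + tau K == K)%N by apply/idP/idP; lia.
by rewrite addrA.
Qed.

Section OneSignedMessages.
Variables (g : nat -> int) (tau : nat -> nat).

Lemma delivered_le_sent K : (forall k, 0 <= g k) ->
  \sum_(k < K) delivered g tau k <= \sum_(k < K) g k.
Proof. by move=> g_ge0; rewrite delivered_before; apply: ler_sum => k _; case: ifP. Qed.

Lemma sent_le_delivered K : (forall k, g k <= 0) ->
  \sum_(k < K) g k <= \sum_(k < K) delivered g tau k.
Proof. by move=> g_le0; rewrite delivered_before; apply: ler_sum => k _; case: ifP. Qed.

Lemma delivered_ge0 k : (forall k, 0 <= g k) -> 0 <= delivered g tau k.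
Proof. by move=> g_ge0; apply: sumr_ge0 => k0 _. Qed.

Lemma delivered_le0 k : (forall k, g k <= 0) -> delivered g tau k <= 0.
Proof. by move=> g_le0; apply: sumr_le0 => k0 _. Qed.

End OneSignedMessages.

Lemma proj_id (R : archiRealFieldType) n (l u : 'I_n -> 'I_n -> R) a b (x : int) :
  Num.ceil (l a b) <= x -> x <= Num.floor (u a b) -> proj l u a b x = x.
Proof. by move=> lo_x x_hi; rewrite /proj (min_r x_hi) (max_r lo_x). Qed.

Lemma proj_empty_range (R : archiRealFieldType) n (l u : 'I_n -> 'I_n -> R) a b (x : int) :
  Num.floor (u a b) < Num.ceil (l a b) -> proj l u a b x = Num.ceil (l a b).
Proof. by move=> empty; rewrite /proj max_l // ge_min (ltW empty). Qed.

Section Execution.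
Variables (R : archiRealFieldType) (n : nat) (E : rel 'I_n).
Variables (l u : 'I_n -> 'I_n -> R) (taubar : nat).
Variables (ord : 'I_n -> seq (iedge n)) (ptr : nat -> 'I_n -> nat).
Variable cc : nat -> 'I_n -> iedge n -> int.
Variables (tauO tauI : nat -> 'I_n -> 'I_n -> nat).
Variables (f fp : nat -> 'I_n -> 'I_n -> int).
Hypothesis run : alg1_run E l u taubar ord ptr cc tauO tauI f fp.

Lemma flow_init a b : E a b ->
  f 0%N a b = Num.ceil (l a b) /\ fp 0%N a b = Num.ceil (l a b).
Proof. by case: run => _ [_ [init _]]; exact: init. Qed.

Lemma flow_update k a b : E a b ->
  f k.+1 a b = proj l u a b (f k a b + cc k b (true, a) +
    delivered (fun k0 => cc k0 a (false, b)) (fun k0 => tauI k0 a b) k).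
Proof. by case: run => _ [_ [_ [_ [upd _]]]]; exact: upd. Qed.

Lemma perceived_update k a b : E a b ->
  fp k.+1 a b = proj l u a b (fp k a b + cc k a (false, b) +
    delivered (fun k0 => cc k0 b (true, a)) (fun k0 => tauO k0 b a) k).
Proof. by case: run => _ [_ [_ [_ [_ upd]]]]; exact: upd. Qed.

Definition current k j (e : iedge n) : int := if e.1 then f k e.2 j else fp k j e.2.
Definition limit j (e : iedge n) : int :=
  if e.1 then Num.floor (u e.2 j) else Num.ceil (l j e.2).

Lemma ord_nonempty k j : 0 < pbal E (f k) (fp k) j -> (0 < size (ord j))%N.
Proof.
case: run => ordP _; case: (ordP j) => _ memP.
case E_ord: (ord j) => [|e s] //; rewrite /pbal !big_pred0 ?subrr // => i.
  by move: (memP (true, i)); rewrite E_ord.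
by move: (memP (false, i)); rewrite E_ord.
Qed.

Lemma node_changes k j :
  [/\ \sum_e net_change (cc k j) e = Num.max (pbal E (f k) (fp k) j) 0,
      pbal E (f k) (fp k) j <= 0 -> forall e, cc k j e = 0,
      forall e, cc k j e != 0 -> e \in ord j
    & forall e, respects_limit (current k j) (limit j) (cc k j) e].
Proof.
apply: step2_spec (@ord_nonempty k j) _.
by case: run => _ [_ [_ [step _]]]; exact: step.
Qed.

Lemma change_signs k j x : 0 <= cc k j (true, x) /\ cc k j (false, x) <= 0.
Proof.
have [_ _ _ lim_ok] := node_changes k j.
by move: (lim_ok (true, x)) (lim_ok (false, x)) => [? _] [? _].
Qed.

Lemma net_change_split k j :
  \sum_e net_change (cc k j) e =
  \sum_(x | E x j) cc k j (true, x) - \sum_(x | E j x) cc k j (false, x).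
Proof.
have [_ _ supp _] := node_changes k j.
have memP := proj2 ((proj1 run) j).
rewrite sum_iedge /net_change /= sumrN.
congr (_ - _).
- rewrite [LHS](bigID (fun x => E x j)) /= [X in _ + X]big1 ?addr0 // => x /negbTE notE.
  by apply/eqP; apply: contraT => /supp; rewrite memP /= notE.
- rewrite [LHS](bigID (fun x => E j x)) /= [X in _ + X]big1 ?addr0 // => x /negbTE notE.
  by apply/eqP; apply: contraT => /supp; rewrite memP /= notE.
Qed.

Section Edge.
Variables a b : 'I_n.
Hypothesis Eab : E a b.

Local Notation lo := (Num.ceil (l a b)).
Local Notation hi := (Num.floor (u a b)).
Local Notation incr := (fun k => cc k b (true, a)).
Local Notation decr := (fun k => cc k a (false, b)).
Local Notation tauF := (fun k => tauI k a b).
Local Notation tauP := (fun k => tauO k b a).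

Lemma incr_ge0 k : 0 <= incr k. Proof. exact: (change_signs k b a).1. Qed.
Lemma decr_le0 k : decr k <= 0. Proof. exact: (change_signs k a b).2. Qed.

Lemma incr_within k : incr k = 0 \/ f k a b + incr k <= hi.
Proof. by have [_ _ _ /(_ (true, a)) [_]] := node_changes k b. Qed.

Lemma decr_within k : decr k = 0 \/ lo <= fp k a b + decr k.
Proof. by have [_ _ _ /(_ (false, b)) [_]] := node_changes k a. Qed.

Lemma edge_frozen : hi < lo ->
  forall k, [/\ f k a b = lo, fp k a b = lo, incr k = 0 & decr k = 0].
Proof.
move=> empty k.
have [f_lo fp_lo] : f k a b = lo /\ fp k a b = lo.
  case: k => [|k]; first exact: flow_init.
  by rewrite flow_update // perceived_update // !proj_empty_range.
split=> //.
- by case: (incr_within k) => //; rewrite f_lo; have := incr_ge0 k; lia.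
- by case: (decr_within k) => //; rewrite fp_lo; have := decr_le0 k; lia.
Qed.

Definition gain_actual k := \sum_(k0 < k) (incr k0 + delivered decr tauF k0).
Definition gain_perceived k := \sum_(k0 < k) (decr k0 + delivered incr tauP k0).

(* The perceived copy lags behind: fewer increments and more decrements
   have reached it. *)
Lemma gain_perceived_le_actual k : gain_perceived k <= gain_actual k.
Proof.
rewrite /gain_perceived /gain_actual !big_split /= [X in _ <= X]addrC.
by apply: lerD; [apply: sent_le_delivered; exact: decr_le0
                |apply: delivered_le_sent; exact: incr_ge0].
Qed.

(* With a nonempty range, both copies are ceil l plus their cumulative
   gains and stay within the range, so the projection never clips. *)
Lemma edge_unclipped : lo <= hi -> forall k,
  [/\ f k a b = lo + gain_actual k, fp k a b = lo + gain_perceived k,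
      lo <= fp k a b & f k a b <= hi].
Proof.
move=> nonempty; elim=> [|k [fE fpE lo_fp f_hi]].
  by rewrite /gain_actual /gain_perceived !big_ord0 addr0; case: (flow_init Eab) => -> ->.
have newf : f k a b + incr k + delivered decr tauF k = lo + gain_actual k.+1.
  by rewrite fE /gain_actual big_ord_recr /=; ring.
have newfp : fp k a b + decr k + delivered incr tauP k = lo + gain_perceived k.+1.
  by rewrite fpE /gain_perceived big_ord_recr /=; ring.
have dF := delivered_le0 tauF k decr_le0.
have dP := delivered_ge0 tauP k incr_ge0.
have gains := gain_perceived_le_actual k.+1.
have lo_fp' : lo <= fp k a b + decr k by case: (decr_within k) => [->|//]; rewrite addr0.
have f_hi' : f k a b + incr k <= hi by case: (incr_within k) => [->|//]; rewrite addr0.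
rewrite flow_update // perceived_update // !proj_id; try lia.
by split; lia.
Qed.

Lemma edge_step k :
  f k.+1 a b = f k a b + incr k + delivered decr tauF k /\
  fp k.+1 a b = fp k a b + decr k + delivered incr tauP k.
Proof.
case: (ltP hi lo) => [empty | nonempty].
  have [f0 fp0 incr0 decr0] := edge_frozen empty k.
  have [f1 fp1 _ _] := edge_frozen empty k.+1.
  have silent g tau : (forall k0, g k0 = 0) -> delivered g tau k = 0.
    by move=> g0; rewrite /delivered big1.
  rewrite f0 fp0 f1 fp1 incr0 decr0 !silent ?addr0 // => k0.
    by have [] := edge_frozen empty k0.
  by have [] := edge_frozen empty k0.
have [f0 fp0 _ _] := edge_unclipped nonempty k.
have [f1 fp1 _ _] := edge_unclipped nonempty k.+1.
rewrite f0 fp0 f1 fp1 /gain_actual /gain_perceived !big_ord_recr /=.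
by split; ring.
Qed.

Lemma edge_in_flight k :
  f k a b - fp k a b =
    (\sum_(k0 < k) incr k0 - \sum_(k0 < k) delivered incr tauP k0) +
    (\sum_(k0 < k) delivered decr tauF k0 - \sum_(k0 < k) decr k0).
Proof.
elim: k => [|k IH]; first by rewrite !big_ord0; case: (flow_init Eab) => -> ->; ring.
have [-> ->] := edge_step k; rewrite !big_ord_recr /=.
by rewrite -[f k a b](subrK (fp k a b)) IH; ring.
Qed.

Lemma decr_covered k : decr k <= f k a b - fp k a b + delivered decr tauF k.
Proof.
rewrite edge_in_flight.
have outstanding_incr := delivered_le_sent tauP k incr_ge0.
have := sent_le_delivered tauF k.+1 decr_le0; rewrite !big_ord_recr /=.
by move: outstanding_incr; lra.
Qed.

End Edge.

Definition returned k j : int :=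
  \sum_(i | E j i) delivered (fun k0 => cc k0 j (false, i)) (fun k0 => tauI k0 j i) k.

Lemma bal_step k j :
  bal E (f k) j + returned k j - \sum_(x | E x j) cc k j (true, x) <= bal E (f k.+1) j.
Proof.
rewrite /bal /returned.
rewrite (eq_bigr _ (fun i Ei => (edge_step Ei k).1)).
rewrite [X in _ <= _ - X](eq_bigr _ (fun x Ex => (edge_step Ex k).1)) !big_split /=.
have in_incr : 0 <= \sum_(i | E j i) cc k i (true, j).
  by apply: sumr_ge0 => i _; exact: (change_signs k i j).1.
have out_decr : \sum_(x | E x j) delivered (fun k0 => cc k0 x (false, j))
                  (fun k0 => tauI k0 x j) k <= 0.
  by apply: sumr_le0 => x _; apply: delivered_le0 => k0; exact: (change_signs k0 x j).2.
move: in_incr out_decr; lra.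
Qed.

Lemma pbal_step k j :
  pbal E (f k) (fp k) j - \sum_e net_change (cc k j) e <= pbal E (f k.+1) (fp k.+1) j.
Proof.
rewrite net_change_split /pbal.
rewrite (eq_bigr _ (fun i Ei => (edge_step Ei k).2)).
rewrite [X in _ <= _ - X](eq_bigr _ (fun x Ex => (edge_step Ex k).1)) !big_split /=.
have in_incr : 0 <= \sum_(i | E j i) delivered (fun k0 => cc k0 i (true, j))
                 (fun k0 => tauO k0 i j) k.
  by apply: sumr_ge0 => i _; apply: delivered_ge0 => k0; exact: (change_signs k0 i j).1.
have out_decr : \sum_(x | E x j) delivered (fun k0 => cc k0 x (false, j))
                  (fun k0 => tauI k0 x j) k <= 0.
  by apply: sumr_le0 => x _; apply: delivered_le0 => k0; exact: (change_signs k0 x j).2.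
move: in_incr out_decr; lra.
Qed.

Lemma pbal_stays_nonneg j k1 k : (k1 <= k)%N ->
  0 <= pbal E (f k1) (fp k1) j -> 0 <= pbal E (f k) (fp k) j.
Proof.
move=> le_k1k ge0; elim: k le_k1k => [|k IH]; first by rewrite leqn0 => /eqP <-.
rewrite leq_eqVlt => /orP[/eqP <- // | /IH {}IH].
apply: le_trans (pbal_step k j).
by have [-> _ _ _] := node_changes k j; rewrite max_l // subrr.
Qed.

Lemma silent_so_far k j : pbal E (f k) (fp k) j < 0 ->
  forall k0, (k0 <= k)%N -> forall e, cc k0 j e = 0.
Proof.
move=> lt0 k0 le_k0k; have [_ idle _ _] := node_changes k0 j; apply: idle.
by rewrite leNgt; apply/negP => /ltW /(pbal_stays_nonneg le_k0k); rewrite leNgt lt0.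
Qed.

Lemma bal_step_silent k j : pbal E (f k) (fp k) j < 0 -> bal E (f k) j <= bal E (f k.+1) j.
Proof.
move=> lt0; have silent := silent_so_far lt0.
have no_incr : \sum_(x | E x j) cc k j (true, x) = 0 by rewrite big1 // => x _; exact: silent.
have no_return : returned k j = 0.
  rewrite /returned big1 // => i _; rewrite /delivered big1 // => k0 _.
  by apply: silent; rewrite -ltnS.
by have := bal_step k j; rewrite no_incr no_return addr0 subr0.
Qed.

Lemma bal_nonneg_after_active k j : 0 <= pbal E (f k) (fp k) j -> 0 <= bal E (f k.+1) j.
Proof.
move=> ge0; have := bal_step k j.
have [total _ _ _] := node_changes k j; rewrite net_change_split max_l // in total.
have surplus : bal E (f k) j - pbal E (f k) (fp k) j = \sum_(i | E j i) (f k j i - fp k j i).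
  by rewrite /bal /pbal sumrB; ring.
have covered : \sum_(i | E j i) cc k j (false, i) <=
    \sum_(i | E j i) (f k j i - fp k j i) + returned k j.
  by rewrite /returned -big_split /=; apply: ler_sum => i Ei; exact: decr_covered.
move: total surplus covered; lra.
Qed.

End Execution.

Theorem proposition2 (R : archiRealFieldType) (n : nat) (E : rel 'I_n)
    (l u : 'I_n -> 'I_n -> R) (taubar : nat)
    (ord : 'I_n -> seq (iedge n)) (ptr : nat -> 'I_n -> nat)
    (cc : nat -> 'I_n -> iedge n -> int)
    (tauO tauI : nat -> 'I_n -> 'I_n -> nat)
    (f fp : nat -> 'I_n -> 'I_n -> int) :
  (2 <= n)%N ->
  (forall a, ~~ E a a) ->
  (forall a b, connect E a b) ->
  (forall a b, E a b -> 1 <= l a b /\ l a b <= u a b) ->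
  alg1_run E l u taubar ord ptr cc tauO tauI f fp ->
  forall (k : nat) (j : 'I_n),
    bal E (f k.+1) j < 0 -> bal E (f k) j < 0.
Proof.
move=> _ _ _ _ run k j bal'_lt0; rewrite ltNge; apply/negP => bal_ge0.
case: (ltrP (pbal E (f k) (fp k) j) 0) => [pbal_lt0 | pbal_ge0].
  by have := le_trans bal_ge0 (bal_step_silent run pbal_lt0); rewrite leNgt bal'_lt0.
by have := bal_nonneg_after_active run pbal_ge0; rewrite leNgt bal'_lt0.
Qed.
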